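(* Let $\alpha>0$, $t_0>0$, $x_0,v_0\in\mathcal H$, and let $x:[t_0,+\infty)\to\mathcal H$ be a solution of the Cauchy problem $$\tfrac{\alpha}{t}\dot x(t)+\operatorname{proj}_{C(x(t))+\ddot x(t)}(0)=0\ (t>t_0),\qquad x(t_0)=x_0,\ \dot x(t_0)=v_0 .$$ For $i=1,\dots,m$ define $\mathcal W_i(t)=f_i(x(t))+\frac12\|\dot x(t)\|^2$. Then for all $i$ and almost all $t\in[t_0,+\infty)$, $$\tfrac{d}{dt}\mathcal W_i(t)\le-\tfrac{\alpha}{t}\|\dot x(t)\|^2 .$$ Hence each $\mathcal W_i$ is nonincreasing, and $\mathcal W_i^\infty=\lim_{t\to+\infty}\mathcal W_i(t)$ exists in $\mathbb R\cup\{-\infty\}$. If $f_i$ is bounded from below, then $\mathcal W_i^\infty\in\mathbb R$.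
   Context: $\mathcal H$ is a real Hilbert space. $f_1,\dots,f_m:\mathcal H\to\mathbb R$ are convex and continuously differentiable. $C(x)=\operatorname{co}\{\nabla f_i(x):i=1,\dots,m\}$. For a closed convex $K$, $\operatorname{proj}_K(y)=\arg\min_{w\in K}\|w-y\|^2$. A solution of the Cauchy problem is a function $x:[t_0,+\infty)\to\mathcal H$ such that: $x\in C^1([t_0,+\infty))$; $\dot x$ is absolutely continuous on $[t_0,T]$ for every $T\ge t_0$; there is a Bochner measurable $\ddot x$ with $\dot x(t)=\dot x(t_0)+\int_{t_0}^t\ddot x(s)\,ds$ for all $t$, and $\frac{d}{dt}\dot x=\ddot x$ a.e.; the equation holds for almost all $t\ge t_0$; and the initial conditions hold. *)

From HB Require Import structures.
From mathcomp Require Import all_boot all_order all_algebra.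
From mathcomp Require Import all_classical all_reals all_analysis.
Set Implicit Arguments. Unset Strict Implicit. Unset Printing Implicit Defensive.
Import Order.TTheory GRing.Theory Num.Theory.
Import numFieldNormedType.Exports.
Local Open Scope classical_set_scope.
Local Open Scope ring_scope.

(* A real Hilbert space is modelled as a complete normed R-module H together
   with a symmetric bilinear form [ip] whose associated quadratic form is the
   square of the norm of H. *)
Definition inner_product {R : realType} {H : normedModType R}
  (ip : H -> H -> R) : Prop :=
  (forall u v : H, ip u v = ip v u) /\
  (forall (a : R) (u v w : H), ip (a *: u + v) w = a * ip u w + ip v w) /\
  (forall u : H, ip u u = `|u| ^+ 2).

Definition convex_fun {R : realType} {H : normedModType R} (f : H -> R) : Prop :=
  forall (u v : H) (l : R), 0 <= l <= 1 ->
    f (l *: u + (1 - l) *: v) <= l * f u + (1 - l) * f v.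

Definition is_gradient {R : realType} {H : normedModType R}
  (ip : H -> H -> R) (f : H -> R) (g : H -> H) : Prop :=
  forall u : H, differentiable f u /\ (forall v : H, 'd f u v = ip (g u) v).

Definition conv_hull {R : realType} {H : normedModType R} {m : nat}
  (g : 'I_m -> H) : set H :=
  [set y | exists l : 'I_m -> R,
     (forall i, 0 <= l i) /\ \sum_(i < m) l i = 1 /\ y = \sum_(i < m) l i *: g i].

Definition set_translate {R : realType} {H : normedModType R}
  (K : set H) (a : H) : set H := [set c + a | c in K].

Definition proj_onto {R : realType} {H : normedModType R} (K : set H) (y : H) : H :=
  xget 0 [set w | K w /\ forall z, K z -> `|w - y| ^+ 2 <= `|z - y| ^+ 2].

Definition abs_cont_on {R : realType} {H : normedModType R}
  (a b : R) (g : R -> H) : Prop :=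
  forall e : R, 0 < e -> exists d : R, 0 < d /\
    forall (n : nat) (a' b' : 'I_n -> R),
      (forall k, a <= a' k /\ a' k <= b' k /\ b' k <= b) ->
      (forall k l, k != l -> b' k <= a' l \/ b' l <= a' k) ->
      \sum_(k < n) (b' k - a' k) < d ->
      \sum_(k < n) `|g (b' k) - g (a' k)| < e.

(* Along the trajectory, d/dt W_i = <grad f_i(x) + x'', x'>.  The equation says that
   x' = -(t/alpha) p, where p is the point of least norm of the convex set
   K = C(x) + x'', and K contains grad f_i(x) + x''; the variational inequality
   <p, z - p> >= 0 for z in K then gives <grad f_i(x) + x'', x'> <= -(alpha/t) |x'|^2
   wherever the equation and x'' = d/dt x' hold, i.e. almost everywhere.
   An almost everywhere nonpositive derivative forces monotonicity only for absolutely
   continuous functions.  W_i is one on every [s, T]: f_i o x is Lipschitz there by the mean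
   value theorem, and |x'|^2/2 is a Lipschitz function of the absolutely continuous x'.
   Monotonicity then follows by creeping from s to T, after covering the exceptional null
   set by an open set of small measure.  Finally, a nonincreasing function has a limit in
   [-oo, +oo) at +oo, which is finite when the function is bounded below. *)

From HB Require Import structures.
From mathcomp Require Import all_boot all_order all_algebra.
From mathcomp Require Import all_classical all_reals all_analysis.
From mathcomp Require Import measurable_realfun ring lra.
Import Order.TTheory GRing.Theory Num.Theory.
Import numFieldNormedType.Exports.
Local Open Scope classical_set_scope.
Local Open Scope ring_scope.

Section InnerProduct.
Context {R : realType} {H : normedModType R} {ip : H -> H -> R}.
Hypothesis hip : inner_product ip.

Lemma ipC u v : ip u v = ip v u. Proof. by case: hip. Qed.

Lemma ipxx u : ip u u = `|u| ^+ 2. Proof. by case: hip => _ []. Qed.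

Lemma ip0l w : ip 0 w = 0.
Proof. by case: hip => _ [+ _] => /(_ 1 0 0 w); rewrite scaler0 addr0 mul1r; lra. Qed.

Lemma ipZl a u w : ip (a *: u) w = a * ip u w.
Proof. by case: hip => _ [+ _]; rewrite -[a *: u]addr0 => ->; rewrite ip0l addr0. Qed.

Lemma ipDl u v w : ip (u + v) w = ip u w + ip v w.
Proof. by case: hip => _ [+ _]; rewrite -[u in LHS]scale1r => ->; rewrite mul1r. Qed.

Lemma ipNl u w : ip (- u) w = - ip u w.
Proof. by rewrite -scaleN1r ipZl mulN1r. Qed.

Lemma ipBl u v w : ip (u - v) w = ip u w - ip v w.
Proof. by rewrite ipDl ipNl. Qed.

Lemma ipZr a u w : ip w (a *: u) = a * ip w u.
Proof. by rewrite ipC ipZl ipC. Qed.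

Lemma ipDr u v w : ip w (u + v) = ip w u + ip w v.
Proof. by rewrite !(ipC w) ipDl. Qed.

Lemma ip_polarization u v :
  ip u v = 2^-1 * (`|u + v| ^+ 2 - `|u| ^+ 2 - `|v| ^+ 2).
Proof. by rewrite -!ipxx ipDl !ipDr (ipC v u); field. Qed.

Lemma cvg_ip {T : Type} (F : set_system T) {FF : Filter F} (u_ v_ : T -> H) u v :
  u_ @ F --> u -> v_ @ F --> v -> (fun t => ip (u_ t) (v_ t)) @ F --> ip u v.
Proof.
move=> cu cv; under eq_fun do rewrite ip_polarization; rewrite ip_polarization.
have sqr_norm_cvg (w_ : T -> H) w :
    w_ @ F --> w -> (fun t => `|w_ t| ^+ 2) @ F --> `|w| ^+ 2.
  by move=> /cvg_norm cw; under eq_fun do rewrite expr2; rewrite expr2; apply: cvgM.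
apply: cvgM; first exact: cvg_cst.
by apply: cvgB; [apply: cvgB|]; apply: sqr_norm_cvg => //; apply: cvgD.
Qed.

End InnerProduct.

Section Projection.
Context {R : realType} {H : normedModType R}.

Lemma convex_setP (K : set H) :
  convex_set (K : set (convex_lmodType H)) <->
  (forall u v (l : R), 0 <= l <= 1 -> K u -> K v -> K (l *: u + (1 - l) *: v)).
Proof.
split=> [hK u v l /andP[l0 l1] Ku Kv | hK u v l]; last first.
  by rewrite !inE => Ku Kv; apply: (hK _ _ l%:num) => //; rewrite ge0 le1.
by have := hK u v (Itv01 l0 l1); rewrite !inE; apply.
Qed.

Lemma convex_conv_hull m (g : 'I_m -> H) :
  convex_set (conv_hull g : set (convex_lmodType H)).
Proof.
apply/convex_setP => _ _ l /andP[l0 l1] [a [a0 [a1 ->]]] [b [b0 [b1 ->]]].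
exists (fun i => l * a i + (1 - l) * b i); split; [|split].
- by move=> i; apply: addr_ge0; apply: mulr_ge0 => //; lra.
- by rewrite big_split /= -!mulr_sumr a1 b1; ring.
- rewrite !scaler_sumr -big_split /=; apply: (@eq_bigr H) => i _.
  by rewrite [RHS]scalerDl !scalerA.
Qed.

Lemma conv_hull_vertex m (g : 'I_m -> H) i : conv_hull g (g i).
Proof.
exists (fun j => (j == i)%:R); split; [by move=> j; rewrite ler0n | split].
- by rewrite (bigD1 i) //= eqxx big1 ?addr0 // => j /negbTE ->.
- by rewrite (bigD1 i) //= eqxx scale1r big1 ?addr0 // => j /negbTE ->; rewrite scale0r.
Qed.

Lemma convex_set_translate (K : set H) y :
  convex_set (K : set (convex_lmodType H)) ->
  convex_set (set_translate K y : set (convex_lmodType H)).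
Proof.
move=> /convex_setP hK; apply/convex_setP => _ _ l l01 [u Ku <-] [v Kv <-].
exists (l *: u + (1 - l) *: v); first exact: hK.
by rewrite !scalerDr addrACA -scalerDl [l + _]addrC subrK scale1r.
Qed.

Lemma quadratic_ge0_near0 (A B : R) : 0 <= B ->
  (forall s, 0 < s -> s <= 1 -> 0 <= 2 * s * A + s ^+ 2 * B) -> 0 <= A.
Proof.
move=> B0 h; rewrite leNgt; apply/negP => A0.
pose s := - A / (B - A).
have hs : s * (B - A) = - A by rewrite /s mulfVK ?gt_eqF //; lra.
have s0 : 0 < s by rewrite /s divr_gt0 //; lra.
have s1 : s <= 1 by rewrite /s ler_pdivrMr ?mul1r; lra.
have := h s s0 s1; nra.
Qed.

Context {ip : H -> H -> R}.
Hypothesis hip : inner_product ip.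

(* When there is no minimiser, [proj_onto] returns its default 0 and the claim is trivial;
   otherwise compare the minimiser [p] with the points [p + s (z - p)] of [K]. *)
Lemma proj_onto0_ip_ge0 {K : set H} {z} :
  convex_set (K : set (convex_lmodType H)) -> K z ->
  0 <= ip (proj_onto K 0) (z - proj_onto K 0).
Proof.
move=> /convex_setP hK Kz; rewrite /proj_onto.
set P := [set w | _]; have [[w Pw]|nP] := pselect (exists w, P w); last first.
  by rewrite xgetPN ?(ip0l hip) // => w Pw; apply: nP; exists w.
have [Kp pmin] := xgetPex 0 (ex_intro _ w Pw); set p := xget 0 P in Kp pmin *.
apply: (@quadratic_ge0_near0 _ (`|z - p| ^+ 2)) => [|s s0 s1]; first exact: exprn_ge0.
have Kw : K (s *: z + (1 - s) *: p) by apply: hK => //; rewrite (ltW s0) s1.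
have := pmin _ Kw.
have -> : s *: z + (1 - s) *: p - 0 = p + s *: (z - p).
  by rewrite subr0 scalerBl scale1r scalerBr addrCA.
move: (z - p) => d; rewrite subr0 -!(ipxx hip) !(ipDl hip) !(ipDr hip) !(ipZl hip) !(ipZr hip).
by rewrite (ipC hip d p); lra.
Qed.

Lemma ip_le_of_proj_onto0 {K : set H} {z v} {c : R} :
  convex_set (K : set (convex_lmodType H)) -> K z -> 0 < c ->
  c *: v + proj_onto K 0 = 0 -> ip z v <= - c * `|v| ^+ 2.
Proof.
move=> cK Kz c0 /eqP; rewrite addr_eq0 -eqr_oppLR => /eqP hp.
have := proj_onto0_ip_ge0 cK Kz; rewrite -hp opprK (ipNl hip) (ipDr hip) !(ipZl hip).
rewrite (ipZr hip) (ipxx hip) (ipC hip v z) oppr_ge0 -mulrDr pmulr_rle0 //.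
lra.
Qed.

End Projection.

Section Derivatives.
Context {R : realType} {H : normedModType R} {ip : H -> H -> R}.
Hypothesis hip : inner_product ip.

Lemma is_derive_gradient_comp {f : H -> R} {g : H -> H} {x : R -> H} {t : R} {v} :
  is_gradient ip f g -> is_derive t 1 x v -> is_derive t 1 (f \o x) (ip (g (x t)) v).
Proof.
move=> /(_ (x t)) [df dfE] xv.
have dx : differentiable x t by apply/derivable1_diffP.
have dfx : differentiable (f \o x) t := differentiable_comp dx df.
apply: DeriveDef; first exact/derivable1_diffP.
by rewrite deriveE // diff_comp //= -(deriveE _ dx) dfE derive_val.
Qed.

Lemma is_derive_half_sqr_norm {y : R -> H} {t : R} {a} :
  is_derive t 1 y a -> is_derive t 1 (fun s => 2^-1 * `|y s| ^+ 2) (ip a (y t)).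
Proof.
move=> ya; have cy : {for t, continuous y}.
  by apply/differentiable_continuous/derivable1_diffP.
have quot : (fun h : R => h^-1 *: (y (h *: 1 + t) - y t)) @ 0^' --> a.
  by rewrite -(derive_val : 'D_1 y t = a); exact: ex_derive.
have shift : (fun h : R => y (h *: 1 + t)) @ 0^' --> y t.
  have toward_t : (fun h : R => h *: 1 + t) @ nbhs 0 --> t.
    rewrite -[X in _ --> X](add0r t); apply: cvgD; last exact: cvg_cst.
    by rewrite -[X in _ --> X](scale0r 1); apply: cvgZl; exact: cvg_id.
  by apply: cvg_within_filter; exact: (cvg_comp _ _ toward_t cy).
have lim : (fun h : R => h^-1 *: (2^-1 * `|y (h *: 1 + t)| ^+ 2 - 2^-1 * `|y t| ^+ 2))
    @ 0^' --> ip a (y t).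
  have -> : ip a (y t) = 2^-1 * ip a (y t + y t) by rewrite (ipDr hip); field.
  have -> : (fun h : R => h^-1 *: (2^-1 * `|y (h *: 1 + t)| ^+ 2 - 2^-1 * `|y t| ^+ 2)) =
      (fun h => 2^-1 * ip (h^-1 *: (y (h *: 1 + t) - y t)) (y (h *: 1 + t) + y t)).
    apply/funext => h; rewrite (ipZl hip) (ipBl hip) !(ipDr hip) -!(ipxx hip).
    by rewrite (ipC hip (y t)) -[_ *: _]/(_ * _); ring.
  apply: cvgM; first exact: cvg_cst.
  by apply: (cvg_ip hip) quot _; apply: cvgD shift _; exact: cvg_cst.
apply: DeriveDef; last exact: cvg_lim lim.
by apply/cvg_ex; exists (ip a (y t)).
Qed.

End Derivatives.

Section IntervalChains.
Context {R : realType}.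
Notation mu := (@lebesgue_measure R).
Implicit Types (U : set R) (G : seq (R * R)).

(* [G] lists disjoint subintervals [[p.1, p.2]] of [U] inside [[lo, hi]], from right to left. *)
Fixpoint interval_chain U (lo hi : R) G : Prop :=
  if G is p :: G' then
    [/\ p.1 <= p.2, p.2 <= hi, [set u | p.1 <= u <= p.2] `<=` U & interval_chain U lo p.1 G']
  else lo <= hi.

Definition chain_length G := \sum_(p <- G) (p.2 - p.1).

Definition chain_variation {V : normedModType R} (F : R -> V) G :=
  \sum_(p <- G) `|F p.2 - F p.1|.

Lemma interval_chain_le {U lo hi G} : interval_chain U lo hi G -> lo <= hi.
Proof.
elim: G hi => [//|p G IH] hi /= [p12 p2hi _ /IH lop1].
by rewrite (le_trans lop1) // (le_trans p12).
Qed.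

Lemma interval_chain_widen {U lo hi hi' G} :
  interval_chain U lo hi G -> hi <= hi' -> interval_chain U lo hi' G.
Proof.
case: G => [|p G] /= => [/le_trans|[p12 p2hi pU chain] hihi']; first exact.
by split=> //; exact: le_trans hihi'.
Qed.

Lemma interval_chain_mem {U lo hi G p} : interval_chain U lo hi G -> p \in G ->
  [/\ lo <= p.1, p.1 <= p.2 & p.2 <= hi].
Proof.
elim: G hi => [//|q G IH] hi /= [q12 q2hi _ chain]; rewrite inE => /orP[/eqP ->|pG].
  by split=> //; exact: interval_chain_le chain.
have [lop1 p12 p2q1] := IH _ chain pG.
by split=> //; rewrite (le_trans p2q1) // (le_trans q12).
Qed.

Lemma interval_chain_nth_le {U lo hi G} : interval_chain U lo hi G -> forall i j,
  (i < j)%N -> (j < size G)%N -> (nth (0, 0) G j).2 <= (nth (0, 0) G i).1.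
Proof.
elim: G hi => [//|q G IH] hi /= [_ _ _ chain] [|i] [|j] //= ij jG.
  by have [] := interval_chain_mem chain (mem_nth (0, 0) jG).
exact: IH chain i j ij jG.
Qed.

Lemma chain_length_le_measure {U lo hi G} : measurable U -> interval_chain U lo hi G ->
  ((chain_length G)%:E <= mu (U `&` `]lo, hi]))%E.
Proof.
move=> mU; elim: G hi => [|p G IH] hi /=.
  by rewrite /chain_length big_nil measure_ge0.
move=> [p12 p2hi pU chain]; have lop1 := interval_chain_le chain.
have mUI (c d : R) : measurable (U `&` `]c, d]) by apply: measurableI => //; exact: measurable_itv.
have -> : U `&` `]lo, hi] = (U `&` `]lo, p.1]) `|` (U `&` `]p.1, hi]).
  by rewrite -setIUr -itv_bndbnd_setU // bnd_simp ?lop1 ?(le_trans p12 p2hi).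
rewrite measureU //; try exact: mUI; last first.
  rewrite setIACA setIid -subset0 => u [_ []] /=; rewrite !in_itv /=.
  by move=> /andP[_ up1] /andP[p1u _]; move: (le_lt_trans up1 p1u); rewrite ltxx.
rewrite /chain_length big_cons EFinD addeC; apply: leeD; first exact: IH.
have -> : ((p.2 - p.1)%:E = mu `]p.1, p.2])%E.
  rewrite lebesgue_measure_itv /= lte_fin.
  by case: ltP => // p21; rewrite (@le_anti _ _ p.2 p.1) ?p21 ?p12 // subrr.
apply: le_measure; rewrite ?inE; [exact: measurable_itv | exact: mUI |].
move=> u /=; rewrite !in_itv /= => /andP[p1u up2]; split.
  by apply: pU; rewrite /= (ltW p1u).
by rewrite p1u (le_trans up2).
Qed.

End IntervalChains.

Section AbsoluteContinuity.
Context {R : realType} {V W : normedModType R}.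

Lemma abs_cont_on_subitv {a b a' b' : R} {g : R -> V} :
  a <= a' -> b' <= b -> abs_cont_on a b g -> abs_cont_on a' b' g.
Proof.
move=> aa' b'b acg e /acg [d [d0 hd]]; exists d; split=> // n c c' hcc' *.
apply: hd => // k; have [? [? ?]] := hcc' k.
by split; [exact: le_trans aa' _ | split=> //; exact: le_trans b'b].
Qed.

Lemma abs_cont_onD (a b : R) (g h : R -> V) :
  abs_cont_on a b g -> abs_cont_on a b h -> abs_cont_on a b (g \+ h).
Proof.
move=> acg ach e e0; have e20 : 0 < e / 2 by rewrite divr_gt0.
have [dg [dg0 hdg]] := acg _ e20; have [dh [dh0 hdh]] := ach _ e20.
exists (Num.min dg dh); split=> [|n c c' hcc' disj]; first by rewrite lt_min dg0.
rewrite lt_min => /andP[/(hdg n c c' hcc' disj) sg /(hdh n c c' hcc' disj) sh].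
apply: le_lt_trans (_ : \sum_(k < n) (`|g (c' k) - g (c k)| + `|h (c' k) - h (c k)|) < e).
  by apply: ler_sum => k _; rewrite /= opprD addrACA ler_normD.
by rewrite big_split /=; lra.
Qed.

Lemma abs_cont_on_id (a b : R) : abs_cont_on a b (fun u : R => u).
Proof.
move=> e e0; exists e; split=> // n c c' hcc' _; apply: le_lt_trans.
by apply: ler_sum => k _; have [_ [cc' _]] := hcc' k; rewrite ger0_norm ?subr_ge0.
Qed.

Lemma abs_cont_on_le {a b M : R} {g : R -> V} {F : R -> W} : 0 <= M ->
  (forall c d, a <= c -> c <= d -> d <= b -> `|F d - F c| <= M * `|g d - g c|) ->
  abs_cont_on a b g -> abs_cont_on a b F.
Proof.
move=> M0 hF acg e e0; have eM0 : 0 < e / (M + 1) by rewrite divr_gt0 //; lra.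
have [d [d0 hd]] := acg _ eM0; exists d; split=> // n c c' hcc' disj /(hd n c c' hcc' disj) sg.
apply: (@le_lt_trans _ _ (M * \sum_(k < n) `|g (c' k) - g (c k)|)).
  by rewrite mulr_sumr; apply: ler_sum => k _; have [? [? ?]] := hcc' k; exact: hF.
apply: (@le_lt_trans _ _ (M * (e / (M + 1)))); first by rewrite ler_wpM2l // ltW.
by rewrite mulrA ltr_pdivrMr; [nra | lra].
Qed.

Lemma abs_cont_on_chain {a b : R} {g : R -> V} : abs_cont_on a b g ->
  forall e, 0 < e -> exists2 d, 0 < d & forall U lo hi G, a <= lo -> hi <= b ->
    interval_chain U lo hi G -> chain_length G < d -> chain_variation g G < e.
Proof.
move=> acg e /acg [d [d0 hd]]; exists d => // U lo hi G alo hib chain.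
rewrite /chain_length /chain_variation !(big_nth (0, 0)) !big_mkord.
apply: hd => [k|k l kl].
  have [lok k12 k2hi] := interval_chain_mem chain (mem_nth (0, 0) (ltn_ord k)).
  by split; [exact: le_trans lok | split=> //; exact: le_trans hib].
case: (ltngtP k l) => [kl'|lk|/val_inj klE]; last by move: kl; rewrite klE eqxx.
  by right; apply: (interval_chain_nth_le chain).
by left; apply: (interval_chain_nth_le chain).
Qed.

End AbsoluteContinuity.

Section Creeping.
Context {R : realType}.
Notation mu := (@lebesgue_measure R).

Lemma real_induction (P : R -> Prop) (a b : R) :
  (forall s, a <= s -> s <= b -> (forall u, a <= u -> u < s -> P u) ->
     exists2 r, 0 < r & forall v, s <= v -> v < s + r -> P v) ->
  forall u, a <= u -> u <= b -> P u.
Proof.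
move=> step u0 au0 u0b; apply: contrapT => nPu0.
pose S := [set s | a <= s /\ forall u, a <= u -> u < s -> P u].
have Sa : S a by split=> // u au ua; move: (le_lt_trans au ua); rewrite ltxx.
have S_le_u0 s : S s -> s <= u0.
  by move=> [_ Ps]; rewrite leNgt; apply/negP => /(Ps _ au0).
have supS : has_sup S by split; [exists a | exists u0 => s /S_le_u0].
have ac : a <= sup S by exact: sup_upper_bound.
have cb : sup S <= b by apply: (le_trans _ u0b); apply: ge_sup; [exists a | exact: S_le_u0].
have Pbelow u : a <= u -> u < sup S -> P u.
  move=> au; rewrite -subr_gt0 => /sup_adherent/(_ supS) [s [_ Ps] us].
  by apply: Ps; rewrite // opprB addrC subrK in us.
have [r r0 Pabove] := step _ ac cb Pbelow.
have : S (sup S + r).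
  split=> [|u au ucr]; first by rewrite (le_trans ac) // lerDl ltW.
  by case: (ltP u (sup S)) => [|cu]; [exact: Pbelow | exact: Pabove].
by move/sup_upper_bound => /(_ supS); rewrite gerDl leNgt r0.
Qed.

Lemma negligible_open_cover {N : set R} {d : R} : mu.-negligible N -> 0 < d ->
  exists U, [/\ open U, N `<=` U & (mu U < d%:E)%E].
Proof.
move=> [A [mA A0 NA]] d0.
have Afin : (mu A < +oo)%E by rewrite A0 ltry.
have [U [oU AU UA]] := lebesgue_regularity_outer mA Afin d0.
exists U; split=> //; first exact: subset_trans AU.
rewrite -(setDUK AU) measureU //; last 2 first.
- exact: measurableD (open_measurable oU) mA.
- by rewrite setDIK.
by rewrite [X in (X + _)%E](_ : _ = 0%E) ?add0e.
Qed.

Lemma derive1_le0_slope_le {F : R -> R} {t e : R} :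
  derivable F t 1 -> derive1 F t <= 0 -> 0 < e ->
  exists2 r, 0 < r & forall u v, t - r < u -> u <= t -> t <= v -> v < t + r ->
    F v - F u <= e * (v - u).
Proof.
move=> dF; rewrite derive1E => F'le0 e0.
have quot_cvg : (fun h => h^-1 *: ((F \o shift t) (h *: 1) - F t)) @ 0^' --> 'D_1 F t := dF.
have : \forall h \near 0^', h^-1 *: ((F \o shift t) (h *: 1) - F t) < e.
  by apply: (cvgr_lt _ quot_cvg); exact: le_lt_trans F'le0 e0.
move=> /nbhs_ballP [r /= r0 hr]; exists r => // u v tu ut tv vt.
have quot w : w != t -> `|w - t| < r -> (w - t)^-1 * (F w - F t) < e.
  move=> wt wtr; have /hr : ball 0 r (w - t) by rewrite /ball /= sub0r normrN.
  by rewrite subr_eq0 /= -[(w - t) *: 1]/((w - t) * 1) mulr1 subrK; apply.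
have right : F v - F t <= e * (v - t).
  have [->|vt0] := eqVneq v t; first by rewrite !subrr mulr0.
  have vt' : 0 < v - t by rewrite subr_gt0 lt_neqAle eq_sym vt0 tv.
  have vtr : `|v - t| < r by rewrite gtr0_norm //; lra.
  by have := quot v vt0 vtr; rewrite mulrC ltr_pdivrMr // => /ltW.
have left : F t - F u <= e * (t - u).
  have [->|ut0] := eqVneq u t; first by rewrite !subrr mulr0.
  have tu' : 0 < t - u by rewrite subr_gt0 lt_neqAle ut0 ut.
  have utr : `|u - t| < r by rewrite -opprB normrN gtr0_norm //; lra.
  have := quot u ut0 utr; rewrite -opprB invrN mulNr -mulrN opprB.
  by rewrite mulrC ltr_pdivrMr // => /ltW.
lra.
Qed.

Section CreepBound.
Variables (F : R -> R) (a : R) (U : set R) (e : R).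

Definition creep_bound u := exists G,
  interval_chain U a u G /\ F u - F a <= e * (u - a) + chain_variation F G.

Lemma creep_bound_start : creep_bound a.
Proof. by exists [::]; rewrite /chain_variation big_nil !subrr mulr0 addr0 /=. Qed.

Lemma creep_bound_slope u v :
  creep_bound u -> u <= v -> F v - F u <= e * (v - u) -> creep_bound v.
Proof.
move=> [G [chain Fu]] uv Fuv; exists G; split; first exact: interval_chain_widen chain uv.
by have := lerD Fuv Fu; rewrite addrA subrK addrA -mulrDr addrA subrK.
Qed.

Lemma creep_bound_extend u v : 0 <= e ->
  creep_bound u -> u <= v -> [set w | u <= w <= v] `<=` U -> creep_bound v.
Proof.
move=> e0 [G [chain Fu]] uv uvU; exists ((u, v) :: G); split=> //=.
rewrite /chain_variation big_cons /= -/(chain_variation F G).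
have : e * (u - a) <= e * (v - a) by rewrite ler_wpM2l // lerD2r.
have := ler_norm (F v - F u); lra.
Qed.

End CreepBound.

(* Cover the exceptional set by an open set [U] of small measure and creep from [a] to [b]:
   inside [U] the increments are charged to a chain of subintervals of [U], whose total
   variation is small by absolute continuity; outside [U] the derivative bounds the slope. *)
Lemma abs_cont_on_increment_le {F : R -> R} {a b e : R} {N : set R} :
  a <= b -> 0 < e -> abs_cont_on a b F -> mu.-negligible N ->
  (forall t, a < t -> t < b -> ~ N t -> derivable F t 1 /\ derive1 F t <= 0) ->
  F b - F a <= e * (b - a) + e.
Proof.
move=> ab e0 acF nN dF; have [d d0 small] := abs_cont_on_chain acF _ e0.
have nNab : mu.-negligible (N `|` [set a] `|` [set b]).
  have pt c : mu.-negligible [set c] by exists [set c]; split=> //; exact: lebesgue_measure_set1.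
  by apply: negligibleU; [apply: negligibleU|].
have [U [oU NU Ud]] := negligible_open_cover nNab d0.
suff [G [chain Fb]] : creep_bound F a U e b.
  apply: le_trans Fb _; rewrite lerD2l ltW // (small U a b G) // -lte_fin.
  apply: le_lt_trans Ud; apply: (le_trans (chain_length_le_measure (open_measurable oU) chain)).
  apply: le_measure; rewrite ?inE; [|exact: open_measurable oU|exact: subIsetl].
  by apply: measurableI; [exact: open_measurable oU | exact: measurable_itv].
apply: (real_induction _ _ _ _ b ab (lexx b)) => s le_as le_sb below.
have near r : 0 < r -> exists2 u, s - r < u /\ u <= s & creep_bound F a U e u.
  move=> r0; case: (ltP (s - r) a) => [sra|asr].
    by exists a; [split | exact: creep_bound_start].
  exists (s - r / 2); last by apply: below; lra.
  by split; lra.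
have [Us|nUs] := pselect (U s).
  have /nbhs_ballP [r /= r0 sU] := oU s Us.
  have r20 : 0 < r / 2 by rewrite divr_gt0.
  have [u [su us] Fu] := near _ r20; exists (r / 2) => // v sv vs.
  apply: creep_bound_extend (ltW e0) Fu _ _ => [|w /andP[uw wv]]; first lra.
  by apply: sU; rewrite /ball /= ltr_norml; apply/andP; split; lra.
have [sN sa sb'] : [/\ ~ N s, s != a & s != b].
  by split; [|apply/eqP..] => ?; apply: nUs; apply: NU; [left; left|left; right|right].
have lt_as : a < s by rewrite lt_neqAle eq_sym sa le_as.
have lt_sb : s < b by rewrite lt_neqAle sb' le_sb.
have [Ds D's] := dF s lt_as lt_sb sN.
have [r r0 slope] := derive1_le0_slope_le Ds D's e0.
have [u [su us] Fu] := near r r0; exists r => // v sv vs.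
by apply: creep_bound_slope Fu _ (slope _ _ su us sv vs); exact: le_trans sv.
Qed.

Lemma abs_cont_on_nonincreasing {F : R -> R} {a b : R} {N : set R} :
  a <= b -> abs_cont_on a b F -> mu.-negligible N ->
  (forall t, a < t -> t < b -> ~ N t -> derivable F t 1 /\ derive1 F t <= 0) ->
  F b <= F a.
Proof.
move=> ab acF nN dF; rewrite -subr_le0; apply/ler_addgt0Pr => e e0.
have ba1 : 0 < b - a + 1 by lra.
have e'0 : 0 < e / (b - a + 1) by rewrite divr_gt0.
have := abs_cont_on_increment_le ab e'0 acF nN dF.
by rewrite -[X in _ <= _ + X]mulr1 -mulrDr mulfVK ?gt_eqF // add0r.
Qed.

End Creeping.

Section WithinContinuity.
Context {R : realType} {V : normedModType R}.

Lemma within_continuous_ip {ip : V -> V -> R} {A : set R} {u v : R -> V} :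
  inner_product ip -> {within A, continuous u} -> {within A, continuous v} ->
  {within A, continuous (fun t => ip (u t) (v t))}.
Proof. by move=> hip cu cv t; apply: (cvg_ip hip); [exact: cu | exact: cv]. Qed.

Lemma within_continuous_itvcy_of_derive {x xd : R -> V} {t0 : R} :
  (forall t, t0 < t -> is_derive t 1 x (xd t)) ->
  (fun h => h^-1 *: (x (t0 + h) - x t0)) @ 0^'+ --> xd t0 ->
  {within `[t0, +oo[, continuous x}.
Proof.
move=> dx dx0; apply/continuous_within_itvcyP; split.
  move=> t; rewrite in_itv /= andbT => t0t.
  by have := dx _ t0t => ?; apply/differentiable_continuous/derivable1_diffP.
have : (fun h => h *: (h^-1 *: (x (t0 + h) - x t0)) + x t0) @ 0^'+ --> 0 *: xd t0 + x t0.
  apply: cvgD; last exact: cvg_cst.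
  by apply: cvgZ dx0; apply: cvg_at_right_filter; exact: cvg_id.
rewrite scale0r add0r => lim A /lim xA.
have {}xA : \forall h \near 0^'+, A (h *: (h^-1 *: (x (t0 + h) - x t0)) + x t0) := xA.
apply/(nbhs_right0P t0 (x @^-1` A)).
near=> h; have h0 : 0 < h by near: h; exact: nbhs_right_gt.
by have := near xA h; rewrite /= scalerA mulfV ?gt_eqF // scale1r subrK; apply.
Unshelve. all: by end_near.
Qed.

Lemma itv_norm_bounded {a b : R} {u : R -> V} : a <= b ->
  {within `[a, b], continuous u} -> exists2 M, 0 <= M & forall t, t \in `[a, b] -> `|u t| <= M.
Proof.
move=> ab cu; have cnu := within_continuous_comp _ _ _ (in1W (@norm_continuous _ V)) cu.
by have [c _ maxc] := EVT_max ab cnu; exists `|u c|.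
Qed.

End WithinContinuity.

Section LipschitzBounds.
Context {R : realType}.

Lemma MVT_norm_le (F F' : R -> R) (a b L : R) :
  {within `[a, b], continuous F} -> (forall u, u \in `]a, b[ -> is_derive u 1 F (F' u)) ->
  (forall u, u \in `]a, b[ -> `|F' u| <= L) ->
  forall c d, a <= c -> c <= d -> d <= b -> `|F d - F c| <= L * `|d - c|.
Proof.
move=> cF dF F'L c d ac cd db; have [->|cd'] := eqVneq c d; first by rewrite !subrr normr0 mulr0.
have {cd'} lt_cd : c < d by rewrite lt_neqAle cd' cd.
have sub_cd : `]c, d[ `<=` `]a, b[.
  by move=> u; rewrite /= !in_itv /= => /andP[cu ud]; rewrite (le_lt_trans ac) // (lt_le_trans ud).
have sub_cd' : `[c, d] `<=` `[a, b].
  by move=> u; rewrite /= !in_itv /= => /andP[cu ud]; rewrite (le_trans ac) // (le_trans ud).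
have [u /sub_cd ab_u ->] := MVT lt_cd (fun u cdu => dF u (sub_cd _ cdu))
  (continuous_subspaceW sub_cd' cF).
by rewrite normrM ler_wpM2r ?F'L.
Qed.

Lemma half_sqr_norm_dist_le {V : normedModType R} (u v : V) (M : R) :
  `|u| <= M -> `|v| <= M -> `|2^-1 * `|v| ^+ 2 - 2^-1 * `|u| ^+ 2| <= M * `|v - u|.
Proof.
move=> uM vM; have := ler_dist_dist v u.
have -> : 2^-1 * `|v| ^+ 2 - 2^-1 * `|u| ^+ 2 = (`|v| - `|u|) * ((`|v| + `|u|) / 2) by field.
rewrite normrM [`|(_ + _) / 2|]ger0_norm => [dist_le|]; last by rewrite divr_ge0 ?addr_ge0.
rewrite mulrC; apply: ler_pM => //.
by rewrite ler_pdivrMr //; lra.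
Qed.

End LipschitzBounds.

Definition energy {R : realType} {H : normedModType R} (f : H -> R) (x xd : R -> H) (t : R) :=
  f (x t) + 2^-1 * `|xd t| ^+ 2.

Section Energy.
Context {R : realType} {H : normedModType R} {ip : H -> H -> R}.
Hypothesis hip : inner_product ip.
Notation mu := (@lebesgue_measure R).

Lemma energy_derive_le {m} {f : 'I_m -> H -> R} {grad : 'I_m -> H -> H} {x xd : R -> H}
    {xdd : H} {c t : R} {i : 'I_m} :
  is_gradient ip (f i) (grad i) -> 0 < c ->
  is_derive t 1 x (xd t) -> is_derive t 1 xd xdd ->
  c *: xd t + proj_onto (set_translate (conv_hull (fun j => grad j (x t))) xdd) 0 = 0 ->
  derivable (energy (f i) x xd) t 1 /\ derive1 (energy (f i) x xd) t <= - c * `|xd t| ^+ 2.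
Proof.
move=> gradf c0 dx dxd eq_t.
have dW : is_derive t 1 (energy (f i) x xd) (ip (grad i (x t)) (xd t) + ip xdd (xd t)).
  exact: is_deriveD (is_derive_gradient_comp gradf dx) (is_derive_half_sqr_norm hip dxd).
split; first exact: (@ex_derive _ _ _ _ _ _ _ dW).
rewrite derive1E (@derive_val _ _ _ _ _ _ _ dW) -(ipDl hip).
apply: (ip_le_of_proj_onto0 hip _ _ c0 eq_t).
  by apply: convex_set_translate; exact: convex_conv_hull.
by exists (grad i (x t)); first exact: conv_hull_vertex.
Qed.

Section Monotonicity.
Context {f : H -> R} {g : H -> H} {x xd : R -> H} {t0 : R}.
Hypotheses (gradf : is_gradient ip f g) (cg : continuous g).
Hypothesis dx : forall t, t0 < t -> is_derive t 1 x (xd t).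
Hypotheses (cx : {within `[t0, +oo[, continuous x}) (cxd : {within `[t0, +oo[, continuous xd}).
Hypothesis acxd : forall T, t0 <= T -> abs_cont_on t0 T xd.

Lemma abs_cont_on_energy s t : t0 <= s -> s <= t -> abs_cont_on s t (energy f x xd).
Proof.
move=> t0s st; have sub_st : `[s, t] `<=` `[t0, +oo[.
  by move=> u; rewrite /= !in_itv /= andbT => /andP[su _]; exact: le_trans su.
have cf : continuous f by move=> u; apply: differentiable_continuous; case: (gradf u).
have cgx := within_continuous_comp _ _ _ (in1W cg) cx.
have cD : {within `[t0, +oo[, continuous (fun u => ip (g (x u)) (xd u))}.
  exact: within_continuous_ip hip cgx cxd.
have [L L0 DL] := itv_norm_bounded st (continuous_subspaceW sub_st cD).
have [M M0 xdM] := itv_norm_bounded st (continuous_subspaceW sub_st cxd).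
apply: abs_cont_onD.
  apply: (abs_cont_on_le L0 _ (abs_cont_on_id s t)); apply: MVT_norm_le.
  - exact: continuous_subspaceW sub_st (within_continuous_comp _ _ _ (in1W cf) cx).
  - move=> u; rewrite in_itv /= => /andP[su _].
    exact: is_derive_gradient_comp gradf (dx _ (le_lt_trans t0s su)).
  - by move=> u; rewrite !in_itv /= => /andP[su ut]; apply: DL; rewrite in_itv /= !ltW.
apply: (abs_cont_on_le M0 _ (abs_cont_on_subitv t0s (lexx t) (acxd _ (le_trans t0s st)))).
by move=> c d sc cd dt; apply: half_sqr_norm_dist_le; apply: xdM; rewrite in_itv /= ?sc ?dt
  ?(le_trans sc cd) ?(le_trans cd dt).
Qed.

Lemma energy_nonincreasing {N : set R} : mu.-negligible N ->
  (forall t, t0 < t -> ~ N t ->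
     derivable (energy f x xd) t 1 /\ derive1 (energy f x xd) t <= 0) ->
  forall s t, t0 <= s -> s <= t -> energy f x xd t <= energy f x xd s.
Proof.
move=> nN dW s t t0s st; apply: (abs_cont_on_nonincreasing st _ nN).
  exact: abs_cont_on_energy.
by move=> u su _; apply: dW; exact: le_lt_trans su.
Qed.

End Monotonicity.

End Energy.

Lemma nonincreasing_itvcy_cvge {R : realType} {W : R -> R} {t0 : R} :
  (forall s t, t0 <= s -> s <= t -> W t <= W s) ->
  exists l : \bar R, [/\ l != +oo%E, (W t)%:E @[t --> +oo] --> l &
    ((exists M, forall t, t0 <= t -> M <= W t) -> l \is a fin_num)].
Proof.
move=> Wnincr; pose V r := (W (Num.max r t0))%:E.
have t0_le_max r : t0 <= Num.max r t0 by rewrite le_max lexx orbT.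
have Vnincr : {homo V : r s / r <= s >-> (s <= r)%E}.
  by move=> r s rs; rewrite lee_fin; apply: Wnincr (t0_le_max r) (le_max2 rs (lexx t0)).
have Vinf_le : (ereal_inf (range V) <= V t0)%E by apply: ereal_inf_lbound; exists t0.
exists (ereal_inf (range V)); split.
- by rewrite lt_eqF // (le_lt_trans Vinf_le) ?ltry.
- apply: cvg_trans (nonincreasing_cvge Vnincr); apply: near_eq_cvg.
  by near=> t; rewrite /V max_l // ltW //; near: t; exact: nbhs_pinfty_gt.
- move=> [M WM]; have : (M%:E <= ereal_inf (range V))%E.
    by apply: le_ereal_inf_tmp => _ [r _ <-]; rewrite lee_fin; exact: WM (t0_le_max r).
  by move: Vinf_le; case: (ereal_inf _).
Unshelve. all: by end_near.
Qed.

Theorem proposition4p1 (R : realType) (H : completeNormedModType R)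
  (ip : H -> H -> R) (m : nat) (f : 'I_m -> H -> R) (grad : 'I_m -> H -> H)
  (alpha t0 : R) (x0 v0 : H) (x xd xdd : R -> H) :
  inner_product ip ->
  (forall i, convex_fun (f i)) ->
  (forall i, is_gradient ip (f i) (grad i)) ->
  (forall i, continuous (grad i)) ->
  0 < alpha -> 0 < t0 ->
  (* x is C^1 on [t0, +oo) with derivative xd *)
  (forall t, t0 < t -> is_derive t 1 x (xd t)) ->
  ((fun h => h^-1 *: (x (t0 + h) - x t0)) @ at_right 0 --> xd t0) ->
  {within `[t0, +oo[, continuous xd} ->
  (* xd is absolutely continuous on every [t0, T] *)
  (forall T, t0 <= T -> abs_cont_on t0 T xd) ->
  (* xdd is (weakly) measurable and xd is its (weak) integral *)
  (forall h : H, measurable_fun `[t0, +oo[ (fun s => ip (xdd s) h)) ->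
  (forall (h : H) (t : R), t0 <= t ->
     (lebesgue_measure).-integrable `[t0, t] (fun s => (ip (xdd s) h)%:E) /\
     ip (xd t) h = ip (xd t0) h + Rintegral lebesgue_measure `[t0, t] (fun s => ip (xdd s) h)) ->
  (* d/dt xd = xdd almost everywhere *)
  {ae lebesgue_measure, forall t, t0 < t -> is_derive t 1 xd (xdd t)} ->
  (* the equation holds for almost every t > t0 *)
  {ae lebesgue_measure, forall t, t0 < t ->
     (alpha / t) *: xd t
     + proj_onto (set_translate (conv_hull (fun i => grad i (x t))) (xdd t)) 0 = 0} ->
  (* initial conditions *)
  x t0 = x0 -> xd t0 = v0 ->
  forall i : 'I_m,
    let W := fun t => f i (x t) + 2^-1 * `|xd t| ^+ 2 in
    {ae lebesgue_measure, forall t, t0 < t ->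
        derivable W t 1 /\ derive1 W t <= - (alpha / t) * `|xd t| ^+ 2}
    /\ (forall s t, t0 <= s -> s <= t -> W t <= W s)
    /\ exists l : \bar R, l != +oo%E /\
         ((fun t => (W t)%:E) @ +oo --> l) /\
         ((exists M : R, forall y : H, M <= f i y) -> l \is a fin_num).
Proof.
move=> hip _ gradf cgrad alpha0 t00 dx dx0 cxd acxd _ _ dxd eqn _ _ i W.
have cx := within_continuous_itvcy_of_derive dx dx0.
have nN := negligibleU dxd eqn; set N := _ `|` _ in nN.
have dW t : t0 < t -> ~ N t ->
    derivable W t 1 /\ derive1 W t <= - (alpha / t) * `|xd t| ^+ 2.
  move=> t0t /not_orP[/contrapT dxd_t /contrapT eqn_t].
  apply: (energy_derive_le hip (gradf i) _ (dx _ t0t) (dxd_t t0t) (eqn_t t0t)).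
  by rewrite divr_gt0 // (lt_trans t00).
have Wnincr : forall s t, t0 <= s -> s <= t -> W t <= W s.
  apply: (energy_nonincreasing hip (gradf i) (cgrad i) dx cx cxd acxd nN) => t t0t Nt.
  have [dWt W't] := dW t t0t Nt; split=> //; apply: le_trans W't _.
  by rewrite mulNr oppr_le0 mulr_ge0 // divr_ge0 ?ltW // (lt_trans t00).
have [l [lfin Wl Wbnd]] := nonincreasing_itvcy_cvge Wnincr.
split.
  by apply: negligibleS nN => t /= dWt; apply: contrapT => Nt; apply: dWt => t0t; exact: dW.
split=> //; exists l; do 2 split=> //; move=> [M fM]; apply: Wbnd; exists M => t _.
by rewrite -[M]addr0 lerD // mulr_ge0.
Qed.
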